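(* Let $\Gamma$ and $\Sigma$ be sets of clauses (with designated blocking variables). Any cost-SR calculus derivation $D_1,\dots,D_t$ from $\Gamma$ (with its witnessing substitutions) is also a valid cost-SR calculus derivation from $\Gamma\cup\Sigma$, provided either (1) the variables of $\Sigma$ do not occur in $\Gamma\cup\{D_1,\dots,D_t\}$, or (2) for every clause $C\in\Sigma$ there is a clause $C'\in\Gamma$ with $C'\subseteq C$.
   Context: Substitutions map variables to $0$, $1$ or literals ($\sigma(\lnot x)=\lnot\sigma(x)$); $(\sigma\circ\tau)(x)=\sigma(\tau(x))$; total assignments assign all variables. $C{\upharpoonright}_\sigma$: apply $\sigma$ to the literals and simplify; $\Gamma{\upharpoonright}_\sigma$ is the multiset of $C{\upharpoonright}_\sigma\ne1$, $C\in\Gamma$. $\lnot C$ is the partial assignment falsifying all literals of $C$. $\Gamma\vdash_1 C$ means unit propagation on $\Gamma{\upharpoonright}_{\lnot C}$ derives the empty clause; $\Gamma\vdash_1\Delta$ means this for all $D\in\Delta$. $\mathrm{cost}(\alpha)=\sum_i\alpha(b_i)$ over blocking variables $b_i$. $C$ is cost-SR w.r.t. $\Gamma$ via $\sigma$ if (1) $\Gamma{\upharpoonright}_{\lnot C}\vdash_1(\Gamma\cup\{C\}){\upharpoonright}_\sigma$ and (2) $\mathrm{cost}(\tau\circ\sigma)\le\mathrm{cost}(\tau)$ for all total $\tau\supseteq\lnot C$. A cost-SR calculus derivation from $\Gamma$: sequence $D_1,\dots,D_t$, each in $\Gamma$, or by weakening (from $A$ infer $B\supseteq A$) or resolution from earlier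 clauses, or cost-SR (with an attached witness) w.r.t. $\Gamma\cup\{D_1,\dots,D_{i-1}\}$ with $\mathrm{Var}(D_i)\subseteq\mathrm{Var}(\Gamma)$. *)

From mathcomp Require Import all_boot.
Set Implicit Arguments. Unset Strict Implicit. Unset Printing Implicit Defensive.

(** Variables are natural numbers; a literal is (x, true) = x or (x, false) = ~x. *)
Definition var := nat.
Definition lit := (var * bool)%type.
Definition negl (l : lit) : lit := (l.1, ~~ l.2).
(** A clause is a finite set of literals, represented by a sequence
    (membership/inclusion is what matters); a formula is a multiset of clauses. *)
Definition clause := seq lit.
Definition formula := seq clause.

Inductive val := VC of bool | VL of lit.
Definition subst := var -> val.
Definition negv (v : val) : val :=
  match v with VC b => VC (~~ b) | VL l => VL (negl l) end.
Definition lsub (s : subst) (l : lit) : val :=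
  if l.2 then s l.1 else negv (s l.1).

(** C|_sigma : None stands for the constant 1 (satisfied clause); otherwise the
    clause of the non-constant images (literals mapped to 0 are removed).
    Simplification also turns a clause containing complementary literals
    (a tautology) into 1. *)
Definition crestr (s : subst) (C : clause) : option clause :=
  let vs := map (lsub s) C in
  if has (fun v => if v is VC true then true else false) vs then None else
  let ls := pmap (fun v => if v is VL l then Some l else None) vs in
  if has (fun l => negl l \in ls) ls then None else Some ls.

Definition frestr (s : subst) (F : formula) : formula := pmap (crestr s) F.

(** ~C : the partial assignment falsifying all literals of C
    (as a substitution; unassigned variables are mapped to themselves). *)
Definition negC (C : clause) : subst := fun x =>
  if (x, true) \in C then VC false
  else if (x, false) \in C then VC true
  else VL (x, true).

Inductive UPref : formula -> Prop :=
| UP_empty F : [::] \in F -> UPref F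
| UP_unit F (l : lit) :
    (exists2 D, D \in F & (D != [::]) && all (fun l' => l' == l) D) ->
    UPref (frestr (negC [:: negl l]) F) -> UPref F.

Definition entails1 (F : formula) (C : clause) : Prop :=
  UPref (frestr (negC C) F).

Definition assignment := var -> bool.
Definition cost (blk : seq var) (a : assignment) : nat := \sum_(b <- blk) a b.
Definition comp_as (t : assignment) (s : subst) : assignment := fun x =>
  match s x with VC b => b | VL l => if l.2 then t l.1 else ~~ t l.1 end.
Definition extends_negC (t : assignment) (C : clause) : Prop :=
  forall l, l \in C -> t l.1 = ~~ l.2.

Definition costSR (blk : seq var) (F : formula) (C : clause) (s : subst) : Prop :=
  (forall D, D \in frestr s (C :: F) -> entails1 (frestr (negC C) F) D) /\
  (forall t : assignment, extends_negC t C -> cost blk (comp_as t s) <= cost blk t).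

Definition occurs (x : var) (F : formula) : bool := has (fun C => x \in map fst C) F.
Definition varsC (C : clause) : seq var := map fst C.

Definition resolvent (A B R : clause) : Prop :=
  exists x : var, [/\ (x, true) \in A, (x, false) \in B &
    forall l, (l \in R) = ((l \in A) && (l != (x, true))) || ((l \in B) && (l != (x, false)))].

(** Justification of a derivation step (indices refer to earlier lines, 0-based). *)
Inductive rule := RAx | RWeak of nat | RRes of nat & nat | RSR of subst.

(** For cost-SR the witness is a substitution
    over the variables of the current formula: it is the identity outside
    Var(G, prev, D). *)
Definition valid_step (blk : seq var) (G : formula) (prev : seq clause)
  (D : clause) (r : rule) : Prop :=
  match r with
  | RAx => D \in G
  | RWeak j => j < size prev /\ {subset nth [::] prev j <= D}
  | RRes j k => [/\ j < size prev, k < size prev &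
                   resolvent (nth [::] prev j) (nth [::] prev k) D]
  | RSR s => [/\ costSR blk (G ++ prev) D s,
                 (forall x, x \in varsC D -> occurs x G) &
                 forall x, ~~ occurs x (D :: G ++ prev) -> s x = VL (x, true)]
  end.

Definition valid_deriv (blk : seq var) (G : formula) (pi : seq (clause * rule)) : Prop :=
  forall i, i < size pi ->
    valid_step blk G (map fst (take i pi)) (nth ([::], RAx) pi i).1 (nth ([::], RAx) pi i).2.

From mathcomp Require Import all_boot.
Set Implicit Arguments. Unset Strict Implicit. Unset Printing Implicit Defensive.

(** Only condition (1) of cost-SR depends on the formula, and enlarging the
    formula by Sigma adds one obligation for each restriction E|sigma of a new
    clause E (the old obligations stay valid since unit propagation is
    monotone). If the variables of E are fresh, both sigma and ~D leave E
    untouched, so E|sigma = E is itself a clause of (Gamma u Sigma)|~D and unit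
    propagation refutes it at once. If E contains an old clause C', then
    C'|sigma is a subclause of E|sigma that is already implied, and implication
    by unit propagation is closed under weakening because unit refutations
    survive partial assignments. *)

Definition partial_assignment (s : subst) : Prop :=
  forall x, s x = VL (x, true) \/ exists b, s x = VC b.

Definition scomp (s1 s2 : subst) : subst := fun x =>
  if s2 x is VL l then lsub s1 l else s2 x.

Definition assigned (s : subst) (l : lit) : bool :=
  if s l.1 is VC _ then true else false.

Definition sat (s : subst) (l : lit) : bool :=
  if lsub s l is VC true then true else false.

Definition tautological (C : clause) : bool := has (fun l => negl l \in C) C.

Lemma partial_negC C : partial_assignment (negC C).
Proof. by move=> x; rewrite /negC; case: ifP => _; [|case: ifP => _]; eauto. Qed.
#[local] Hint Resolve partial_negC : core.

Lemma scompE s1 s2 x : partial_assignment s2 ->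
  scomp s1 s2 x = if s2 x is VC b then VC b else s1 x.
Proof. by move/(_ x); rewrite /scomp => -[->|[b ->]]. Qed.

Lemma partial_scomp s1 s2 :
  partial_assignment s1 -> partial_assignment s2 -> partial_assignment (scomp s1 s2).
Proof. by move=> H1 H2 x; rewrite scompE //; case: (H2 x) => [->|[b ->]]; eauto. Qed.

Lemma lsub_partial s l : partial_assignment s ->
  lsub s l = if s l.1 is VC b then VC (b == l.2) else VL l.
Proof. by case: l => x [] /(_ x); rewrite /lsub /= => -[->|[[] ->]]. Qed.

Lemma assigned_sat s l : partial_assignment s ->
  assigned s l -> sat s l || sat s (negl l).
Proof.
by move=> Hs; rewrite /sat /assigned !lsub_partial //=; case: (s l.1) => // b _; case: l.2; case: b.
Qed.

Lemma crestr_partial s E : partial_assignment s ->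
  crestr s E = if has (sat s) E then None else
    let R := [seq l <- E | ~~ assigned s l] in
    if tautological R then None else Some R.
Proof.
move=> Hs; rewrite /crestr has_map.
have -> : pmap (fun v => if v is VL l then Some l else None) (map (lsub s) E)
        = [seq l <- E | ~~ assigned s l].
  elim: E => //= l E ->; rewrite lsub_partial // /assigned.
  by case: (s l.1).
by case: has.
Qed.

Lemma crestr_not_tautological s E R : crestr s E = Some R -> ~~ tautological R.
Proof. by rewrite /crestr; case: ifP => // _; case: ifP => // /negbT ? [<-]. Qed.

Lemma tautological_unassigned s R : partial_assignment s ->
  ~~ has (sat s) R -> tautological R -> tautological [seq l <- R | ~~ assigned s l].
Proof.
move=> Hs /hasPn nsat /hasP [l lR nlR].
have nal : ~~ assigned s l.
  apply/negP => /(assigned_sat Hs) /orP[] sl.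
    by move: (nsat _ lR); rewrite sl.
  by move: (nsat _ nlR); rewrite sl.
by apply/hasP; exists l; rewrite mem_filter nal.
Qed.

Lemma crestr_scomp s1 s2 E : partial_assignment s1 -> partial_assignment s2 ->
  obind (crestr s1) (crestr s2 E) = crestr (scomp s1 s2) E.
Proof.
move=> H1 H2; have H12 := partial_scomp H1 H2.
have assigned_scomp l : assigned (scomp s1 s2) l = assigned s2 l || assigned s1 l.
  by rewrite /assigned scompE //; case: (s2 l.1).
have sat_scomp l : sat (scomp s1 s2) l = sat s2 l || ~~ assigned s2 l && sat s1 l.
  rewrite /sat /assigned !lsub_partial // scompE //.
  by case: (s2 l.1) => [b|l'] /=; rewrite ?orbF.
set R2 := [seq l <- E | ~~ assigned s2 l].
have filter_scomp :
    [seq l <- R2 | ~~ assigned s1 l] = [seq l <- E | ~~ assigned (scomp s1 s2) l].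
  by rewrite -filter_predI; apply: eq_filter => l /=; rewrite assigned_scomp negb_or andbC.
have has_sat_scomp : has (sat (scomp s1 s2)) E = has (sat s2) E || has (sat s1) R2.
  rewrite (@eq_has _ _ (predU (sat s2) (predI (sat s1) (fun l => ~~ assigned s2 l)))).
    by rewrite has_predU /R2 !has_count count_filter.
  by move=> l; rewrite /= sat_scomp andbC.
rewrite !crestr_partial // has_sat_scomp -filter_scomp.
case: (has (sat s2) E) => //=.
case t2: (tautological R2) => /=; last by rewrite crestr_partial.
by case: ifP => // /negbT nsat; rewrite (tautological_unassigned H1 nsat t2).
Qed.

Lemma frestr_scomp s1 s2 F : partial_assignment s1 -> partial_assignment s2 ->
  frestr s1 (frestr s2 F) = frestr (scomp s1 s2) F.
Proof.
move=> H1 H2; rewrite /frestr; elim: F => //= E F IH; rewrite -crestr_scomp //.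
by case: (crestr s2 E) => [R|] //=; case: (crestr s1 R) => [R'|] /=; rewrite IH.
Qed.

Lemma crestr_eq_in s s' E : {in E, forall l, s l.1 = s' l.1} -> crestr s E = crestr s' E.
Proof.
move=> ss'; rewrite /crestr; have -> // : map (lsub s) E = map (lsub s') E.
by apply/eq_in_map => l /ss'; rewrite /lsub => ->.
Qed.

Lemma frestr_eq s s' F : s =1 s' -> frestr s F = frestr s' F.
Proof. by move=> ss'; apply: eq_pmap => E; apply: crestr_eq_in => l _. Qed.

Lemma mem_frestr s F R : (R \in frestr s F) <-> exists2 E, E \in F & crestr s E = Some R.
Proof.
rewrite /frestr mem_pmap; split; first by case/mapP => E EF e; exists E.
by case=> E EF e; apply/mapP; exists E; rewrite ?e.
Qed.

Lemma frestr_subset s F F' : {subset F <= F'} -> {subset frestr s F <= frestr s F'}.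
Proof. by move=> sub R /mem_frestr [E /sub EF' e]; apply/mem_frestr; exists E. Qed.

Lemma tautological_subset C C' : {subset C' <= C} -> tautological C' -> tautological C.
Proof. by move=> sub /hasP [l /sub lC /sub nlC]; apply/hasP; exists l. Qed.

Lemma pmap_map (aT bT rT : Type) (f : bT -> option rT) (h : aT -> bT) s :
  pmap f (map h s) = pmap (f \o h) s.
Proof. by elim: s => //= x s ->. Qed.

Lemma crestr_subset s E E' R : {subset E' <= E} -> crestr s E = Some R ->
  exists2 R', crestr s E' = Some R' & {subset R' <= R}.
Proof.
rewrite /crestr !has_map !pmap_map => sub.
set f := (_ \o lsub s).
have sub_lits : {subset pmap f E' <= pmap f E}.
  by move=> l; rewrite !mem_pmap => /mapP [l0 /sub l0E ->]; apply: map_f.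
case: ifP => // /hasPn sat0; case: ifP => // /negbT ntaut [<-].
rewrite ifN; last by apply/hasPn => l /sub; apply: sat0.
rewrite ifN; first by exists (pmap f E').
by apply: contra ntaut => /(tautological_subset sub_lits).
Qed.

Lemma negl_eqF l : (negl l == l) = false.
Proof. by case: l => x []; rewrite /negl /= xpair_eqE eqxx. Qed.

Lemma negC_notin C x : x \notin varsC C -> negC C x = VL (x, true).
Proof. by move=> nx; rewrite /negC !ifN //; apply: contra nx => /(map_f fst). Qed.

Lemma negC_mem C l : ~~ tautological C -> l \in C -> negC C l.1 = VC (~~ l.2).
Proof.
case: l => x [] ntaut lC; rewrite /negC /= ?lC // ifN //.
by apply: contra ntaut => xC; apply/hasP; exists (x, true).
Qed.

Lemma scomp_negC C C' : ~~ tautological C -> {subset C' <= C} ->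
  scomp (negC C) (negC C') =1 negC C.
Proof.
move=> ntaut sub x; rewrite scompE // {1}/negC.
case: ifP => [/sub/(negC_mem ntaut) -> //|_].
by case: ifP => [/sub/(negC_mem ntaut) -> //|_].
Qed.

Lemma crestr_negC_self C : ~~ tautological C -> crestr (negC C) C = Some [::].
Proof.
move=> ntaut; rewrite crestr_partial // ifN; last first.
  by apply/hasPn => l lC; rewrite /sat lsub_partial // negC_mem //; case: l.2.
by rewrite (@eq_in_filter _ _ pred0) ?filter_pred0 // => l lC; rewrite /assigned negC_mem.
Qed.

Lemma crestr_unit s l D : partial_assignment s -> D != [::] -> all (pred1 l) D ->
  crestr s D = if s l.1 is VC b then (if b == l.2 then None else Some [::]) else Some D.
Proof.
move=> Hs; case: D => // y D _ /all_pred1P ->; rewrite crestr_partial // has_nseq filter_nseq.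
rewrite /sat /assigned lsub_partial //.
case: (Hs l.1) => [->|[b ->]]; last by case: (b == l.2).
by rewrite andbF mul1n /tautological has_nseq mem_nseq negl_eqF !andbF.
Qed.

Lemma UPref_subset F F' : {subset F <= F'} -> UPref F -> UPref F'.
Proof.
move=> sub H; elim: H F' sub => {F} [F Fe|F l [D DF Dl] _ IH] F' sub.
  by apply: UP_empty; apply: sub.
apply: (UP_unit (l := l)); first by exists D => //; apply: sub.
by apply: IH; apply: frestr_subset.
Qed.

(* A propagated unit [l] is either left open by [s], and is propagated again,
   or fixed by [s]: if [l] becomes true the step is vacuous, if it becomes
   false its clause is already empty. *)
Lemma UPref_restr s F : partial_assignment s -> UPref F -> UPref (frestr s F).
Proof.
move=> Hs H; elim: H s Hs => {F} [F Fe|F l [D DF /andP [nD Dl]] _ IH] s Hs.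
  by apply: UP_empty; apply/mem_frestr; exists [::].
set u := negC [:: negl l].
have Hu : partial_assignment u := partial_negC _.
have u_l : u l.1 = VC l.2.
  have ntaut : ~~ tautological [:: negl l] by rewrite /tautological /= inE negl_eqF.
  by have := negC_mem ntaut (mem_head _ _); rewrite /= negbK.
have u_other x : x != l.1 -> u x = VL (x, true).
  by move=> ne; apply: negC_notin; rewrite /varsC inE.
move: (IH s Hs); rewrite frestr_scomp // => {}IH.
have crD := crestr_unit Hs nD Dl.
case: (Hs l.1) => [sl|[b sl]]; rewrite sl in crD.
  apply: (UP_unit (l := l)).
    by exists D; [apply/mem_frestr; exists D | apply/andP].
  rewrite -/u frestr_scomp // (frestr_eq _ (s' := scomp s u)) // => x.
  rewrite !scompE //; case: (eqVneq x l.1) => [->|ne]; first by rewrite sl u_l.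
  by rewrite u_other //; case: (Hs x) => [->|[c ->]].
case: eqP crD => [bl _|_ crD]; last by apply: UP_empty; apply/mem_frestr; exists D.
rewrite (frestr_eq _ (s' := s)) // in IH => x.
rewrite -/u scompE //; case: (eqVneq x l.1) => [->|ne]; first by rewrite u_l sl bl.
by rewrite u_other.
Qed.

Lemma entails1_subset F F' C : {subset F <= F'} -> entails1 F C -> entails1 F' C.
Proof. by move=> sub; apply: UPref_subset; apply: frestr_subset. Qed.

Lemma entails1_mem F C : C \in F -> ~~ tautological C -> entails1 F C.
Proof.
by move=> CF ntaut; apply: UP_empty; apply/mem_frestr; exists C; rewrite ?crestr_negC_self.
Qed.

Lemma entails1_weaken F C C' : ~~ tautological C -> {subset C' <= C} ->
  entails1 F C' -> entails1 F C.
Proof.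
move=> ntaut sub /(UPref_restr (partial_negC C)); rewrite frestr_scomp //.
by rewrite (frestr_eq _ (scomp_negC ntaut sub)).
Qed.

Lemma occurs_subset x F F' : {subset F <= F'} -> occurs x F -> occurs x F'.
Proof. by move=> sub /hasP [C /sub CF' xC]; apply/hasP; exists C. Qed.

Section CostSRExtension.

Variables (blk : seq var) (F F' : formula) (D : clause) (s : subst).
Hypothesis subFF' : {subset F <= F'}.

Lemma costSR_extend :
  (forall E R, E \in F' -> E \notin F -> crestr s E = Some R ->
     entails1 (frestr (negC D) F') R) ->
  costSR blk F D s -> costSR blk F' D s.
Proof.
move=> new [old cost_s]; split=> // R /mem_frestr [E EDF' e].
have [EDF|nEDF] := boolP (E \in D :: F).
  apply: entails1_subset (frestr_subset subFF') _.
  by apply: old; apply/mem_frestr; exists E.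
have [EF' nEF] : E \in F' /\ E \notin F.
  by move: EDF' nEDF; rewrite !inE negb_or => /orP [/eqP ->|->]; rewrite ?eqxx // => /andP [].
exact: new e.
Qed.

Lemma costSR_extend_fresh :
  (forall x, ~~ occurs x (D :: F) -> s x = VL (x, true)) ->
  (forall E x, E \in F' -> E \notin F -> x \in varsC E -> ~~ occurs x (D :: F)) ->
  costSR blk F D s -> costSR blk F' D s.
Proof.
move=> s_id fresh; apply: costSR_extend => E R EF' nEF e.
apply: entails1_mem; last exact: crestr_not_tautological e.
apply/mem_frestr; exists E => //; rewrite -e; apply: crestr_eq_in => l lE.
have nx := fresh E l.1 EF' nEF (map_f fst lE).
rewrite s_id // negC_notin //.
by move: nx; rewrite /occurs /= negb_or => /andP [].
Qed.

Lemma costSR_extend_subsumed :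
  (forall E, E \in F' -> E \notin F -> exists2 C, C \in F & {subset C <= E}) ->
  costSR blk F D s -> costSR blk F' D s.
Proof.
move=> subsumed Hsr; apply: costSR_extend (Hsr) => E R EF' nEF e.
have [C CF CE] := subsumed E EF' nEF.
have [RC eC RCR] := crestr_subset CE e.
apply: entails1_weaken (crestr_not_tautological e) RCR _.
apply: entails1_subset (frestr_subset subFF') _.
by apply: Hsr.1; apply/mem_frestr; exists C; rewrite // inE CF orbT.
Qed.

End CostSRExtension.

Lemma valid_step_cat blk G S prev D r :
  ((forall x, occurs x S -> ~~ occurs x (D :: G ++ prev)) \/
   (forall C, C \in S -> exists2 C', C' \in G & {subset C' <= C})) ->
  valid_step blk G prev D r -> valid_step blk (G ++ S) prev D r.
Proof.
move=> HS; case: r => [|j|j k|s] //=; first by rewrite mem_cat => ->.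
case=> Hsr Hvars s_id.
have sub : {subset G ++ prev <= (G ++ S) ++ prev}.
  by move=> C; rewrite !mem_cat => /orP [->|->]; rewrite ?orbT.
have new_S E : E \in (G ++ S) ++ prev -> E \notin G ++ prev -> E \in S.
  by rewrite !mem_cat -orbA orbCA => /orP [-> //|-> //].
split.
- case: HS => [fresh|subsumed].
    apply: costSR_extend_fresh sub s_id _ Hsr => E x EF' nEF xE.
    by apply: fresh; apply/hasP; exists E; first exact: new_S.
  apply: costSR_extend_subsumed sub _ Hsr => E EF' nEF.
  have [C CG CE] := subsumed E (new_S E EF' nEF).
  by exists C; rewrite ?mem_cat ?CG.
- by move=> x /Hvars; rewrite /occurs has_cat => ->.
- move=> x nx; apply: s_id; apply: contra nx.
  by case/orP => [-> //|/(occurs_subset sub) ->]; rewrite orbT.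
Qed.

Theorem lemma6p4 (blk : seq var) (G S : formula) (pi : seq (clause * rule)) :
  valid_deriv blk G pi ->
  ((forall x, occurs x S -> ~~ occurs x (G ++ map fst pi)) \/
   (forall C, C \in S -> exists2 C', C' \in G & {subset C' <= C})) ->
  valid_deriv blk (G ++ S) pi.
Proof.
move=> Hv HS i lt_i; have := Hv i lt_i.
have prev_pi : {subset map fst (take i pi) <= map fst pi}.
  by move=> C; rewrite map_take => /mem_take.
have line_pi : (nth ([::], RAx) pi i).1 \in map fst pi.
  by rewrite -(nth_map _ [::]) // mem_nth ?size_map.
case: (nth _ pi i) line_pi => D r D_pi /=.
apply: valid_step_cat; case: HS => [fresh|]; [left|by right].
move=> x /fresh; apply: contra; apply: occurs_subset => C.
rewrite inE !mem_cat => /orP [/eqP ->|/orP [-> //|/prev_pi ->]]; last by rewrite orbT.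
by rewrite D_pi orbT.
Qed.
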